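(* Let $G$ be a finite group, $p$ a prime, and let $P$ be a Sylow $p$-subgroup of $G$. If $P/O_p(G)$ is cyclic, then $G$ does not have a redundant Sylow $p$-subgroup.
   Context: $O_p(G)$ denotes the largest normal $p$-subgroup of $G$. For a finite group $G$ and a prime $p$, $G_p$ denotes the set of $p$-elements of $G$ and $\mathrm{Syl}_p(G)$ the set of Sylow $p$-subgroups of $G$. $G$ is said to have a redundant Sylow $p$-subgroup if $G_p$ is contained in the union of the members of some proper subset of $\mathrm{Syl}_p(G)$. *)

From mathcomp Require Import all_boot all_fingroup all_solvable.
Set Implicit Arguments. Unset Strict Implicit. Unset Printing Implicit Defensive.
Local Open Scope group_scope.

Definition p_elements (gT : finGroupType) (p : nat) (G : {set gT}) : {set gT} :=
  [set x in G | p.-elt x].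

Definition has_redundant_Sylow (gT : finGroupType) (p : nat) (G : {set gT}) : Prop :=
  exists S : {set {group gT}},
    S \proper 'Syl_p(G) /\ p_elements p G \subset \bigcup_(Q in S) Q.

From mathcomp Require Import all_boot all_fingroup all_solvable.
Local Open Scope group_scope.

(* Every Sylow p-subgroup Q of G contains O := O_p(G), and Q / O is cyclic
   because it is conjugate to P / O.  Lift a generator of Q / O to x in Q: any
   Sylow p-subgroup R containing x also contains O, hence contains Q, hence
   equals Q.  So x is a p-element lying in Q alone, and no Sylow subgroup can
   be dropped from a covering of the p-elements. *)

Section UniqueHall.

Variables (gT : finGroupType) (pi : nat_pred) (G H : {group gT}).

Lemma cyclic_quotientJ (N : {group gT}) g :
  g \in 'N(N) -> cyclic (H :^ g / N) = cyclic (H / N).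
Proof. by move=> Ng; rewrite quotientJ // cyclicJ. Qed.

Lemma exists_elt_in_unique_pHall :
  pi.-Hall(G) H -> cyclic (H / 'O_pi(G)) ->
  exists2 x, x \in H & forall K : {group gT}, pi.-Hall(G) K -> x \in K -> K = H.
Proof.
move=> hallH /cyclicP[y defHq].
have nOH : H \subset 'N('O_pi(G)).
  exact: subset_trans (pHall_sub hallH) (normal_norm (pcore_normal _ _)).
have /morphimP[x Nx Hx def_y] : y \in H / 'O_pi(G) by rewrite defHq cycle_id.
rewrite {y}def_y in defHq.
exists x => // K hallK Kx.
have sOK : 'O_pi(G) \subset K := pcore_sub_Hall hallK.
have sHK : H \subset K.
  rewrite -(quotientSGK nOH sOK) defHq -quotient_cycle //.
  by rewrite quotientS ?cycle_subG.
by apply: group_inj; apply: sub_pHall hallH (pHall_pgroup hallK) sHK (pHall_sub hallK).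
Qed.

End UniqueHall.

Lemma not_redundant_Sylow (gT : finGroupType) (p : nat) (G : {group gT}) :
  (forall Q : {group gT}, p.-Sylow(G) Q ->
     exists2 x, x \in Q & forall R : {group gT}, p.-Sylow(G) R -> x \in R -> R = Q) ->
  ~ has_redundant_Sylow p G.
Proof.
move=> unique_elt [S [/properP[sSSyl [Q SylQ notSQ]] coverS]].
have sylQ : p.-Sylow(G) Q by rewrite inE in SylQ.
have [x Qx uniqQ] := unique_elt Q sylQ.
have : x \in p_elements p G.
  by rewrite inE (subsetP (pHall_sub sylQ)) ?(mem_p_elt (pHall_pgroup sylQ)).
case/(subsetP coverS)/bigcupP=> R SR Rx.
have sylR : p.-Sylow(G) R by have := subsetP sSSyl R SR; rewrite inE.
by move: notSQ; rewrite -(uniqQ R sylR Rx) SR.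
Qed.

Theorem corollary2p3 (gT : finGroupType) (G P : {group gT}) (p : nat) :
  prime p -> P \in 'Syl_p(G) -> cyclic (P / 'O_p(G)) ->
  ~ has_redundant_Sylow p G.
Proof.
rewrite inE => _ sylP cycP; apply: not_redundant_Sylow => Q sylQ.
apply: exists_elt_in_unique_pHall => //.
have [g Gg ->] := Sylow_trans sylP sylQ.
by rewrite cyclic_quotientJ // (subsetP (normal_norm (pcore_normal _ _))).
Qed.
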